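(* Let $n$ be a positive integer. Define $g:T_n\to D_n$ by $g(A,B,C)=r(A,B,C)$ if $(A,B,C)\in R_n$; $g(A,B,C)=s(A,B,C)$ if $(A,B,C)\in U_n$; $g(A,B,C)=t(A,B,C)$ if $(A,B,C)\in V_n\setminus U_n$; and $g(A,B,C)=t(z(A,B,C))$ if $(A,B,C)\in J_n$. Then $g$ is a bijection from $T_n$ onto $D_n$. (In particular $(2n+1)\binom{2n}{n}=\sum_{i+j+k=n}\binom{2i}{i}\binom{2j}{j}\binom{2k}{k}$, the sum over nonnegative integer triples.)
   Context: A lattice path here is a finite (possibly empty) sequence of steps, each an up step $(1,1)$ or a down step $(1,-1)$, drawn as a polygonal line from a given starting lattice point; its lattice points are its starting point and the endpoints of its steps; the height of a point is its vertical coordinate. Concatenation of paths means drawing them successively, each starting at the endpoint of the preceding one, the first starting at $(0,0)$. $T_n$ is the set of ordered triples $(A,B,C)$ of lattice paths such that for some nonnegative integers $i,j,k$ with $i+j+k=n$, $A$ has $i$ up and $i$ down steps, $B$ has $j$ up and $j$ down steps, and $C$ has $k$ up and $k$ down steps; each of $A,B,C$ is regarded as drawn starting (and hence ending) on the horizontal axis, and heights of points of $C$ refer to this drawing. $D_n$ is the set of pairs $(H,X)$ where $H$ is a lattice path with $n$ up and $n$ down steps drawn from $(0,0)$ to $(2n,0)$ and $X$ is one of the $2n+1$ lattice points of $H$. $R_n$: triples in $T_n$ with $C$ empty. $U_n$: triples with $C$ having a point strictly above the horizontal axis and $B$ either empty or ending with a down step. $V_n$: triples with $C$ having a point strictly below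 the horizontal axis and $B$ either empty or ending with an up step. $I_n=U_n\cap V_n$. $J_n=T_n\setminus(R_n\cup U_n\cup V_n)$. $r:R_n\to D_n$: $r(A,B,\emptyset)=(H,X)$ with $H$ the concatenation of $A$ and $B$ and $X$ the point where $A$ and $B$ meet. $s:U_n\to D_n$: let $K$ be the leftmost point of $C$ of maximal height, cutting $C$ into left part $C_1$ and right part $C_2$; $s(A,B,C)=(H,X)$ with $H$ the concatenation of $C_1,A,B,C_2$ and $X$ the point where $A$ ends and $B$ begins. $t:V_n\to D_n$: same as $s$ but with $K$ the leftmost point of $C$ of minimal height. $z:J_n\to I_n$: $z(A,B,C)=(A,\emptyset,BC)$, where $BC$ is the concatenation of $B$ followed by $C$. *)

From mathcomp Require Import all_boot all_order all_algebra.
Set Implicit Arguments. Unset Strict Implicit. Unset Printing Implicit Defensive.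
Import Order.TTheory GRing.Theory Num.Theory.

(* A lattice path is a sequence of steps: true = up step (1,1), false = down (1,-1). *)
Definition lpath := seq bool.
Definition triple := (lpath * lpath * lpath)%type.

Definition nups (p : lpath) : nat := count id p.
Definition ndowns (p : lpath) : nat := count negb p.

Definition height (p : lpath) (k : nat) : int :=
  (\sum_(b <- take k p) (if b then 1 else -1))%R.

Definition heights (p : lpath) : seq int := [seq height p k | k <- iota 0 (size p).+1].

Definition above (p : lpath) : bool := has (fun h => 0 < h)%R (heights p).
Definition below (p : lpath) : bool := has (fun h => h < 0)%R (heights p).

Definition ends_down (B : lpath) : bool :=
  if B is [::] then true else ~~ last true B.
Definition ends_up (B : lpath) : bool :=
  if B is [::] then true else last false B.

Definition inT (n : nat) (x : triple) : bool :=
  let: (A, B, C) := x in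
  [&& nups A == ndowns A, nups B == ndowns B, nups C == ndowns C &
      nups A + nups B + nups C == n].

(* D_n : X is represented by its index 0..2n along H *)
Definition inD (n : nat) (y : lpath * nat) : bool :=
  let: (H, X) := y in [&& nups H == n, ndowns H == n & X <= 2 * n].

Definition inR (x : triple) : bool := let: (A, B, C) := x in C == [::].
Definition inU (x : triple) : bool := let: (A, B, C) := x in above C && ends_down B.
Definition inV (x : triple) : bool := let: (A, B, C) := x in below C && ends_up B.

Definition r (x : triple) : lpath * nat :=
  let: (A, B, C) := x in (A ++ B, size A).

Definition maxh (C : lpath) : int := foldr Num.max 0%R (heights C).
Definition minh (C : lpath) : int := foldr Num.min 0%R (heights C).
Definition kmax (C : lpath) : nat := index (maxh C) (heights C).
Definition kmin (C : lpath) : nat := index (minh C) (heights C).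

Definition cut_concat (K : nat) (x : triple) : lpath * nat :=
  let: (A, B, C) := x in
  (take K C ++ A ++ B ++ drop K C, K + size A).

Definition s (x : triple) : lpath * nat := let: (A, B, C) := x in cut_concat (kmax C) x.
Definition t (x : triple) : lpath * nat := let: (A, B, C) := x in cut_concat (kmin C) x.
Definition z (x : triple) : triple := let: (A, B, C) := x in (A, [::], B ++ C).

Definition g (x : triple) : lpath * nat :=
  if inR x then r x
  else if inU x then s x
  else if inV x then t x
  else t (z x).

(* Under g, the marked point X of g(A, B, C) lies on the axis for R_n, strictly above it
   for U_n and strictly below it for the rest, and r, s, t are bijections onto these three
   parts of D_n.  For s, the triple is read back from (H, X): the cut point K of C is the
   first point of H at the height of X, A is the piece of H from K to X, and B is the piece
   of H after X up to its last return to that height from above, after which the end of C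
   stays weakly below.  The map t is s conjugated by the reflection of all paths.  Finally
   z is a bijection from J_n onto I_n = U_n ∩ V_n: in a triple of J_n the path C lies
   weakly on the side opposite to the one from which B returns to the axis, so B is the
   prefix of BC ending at the last crossing of the axis.  Hence t is applied bijectively
   to V_n \ U_n together with z(J_n) = I_n, that is, to all of V_n. *)

From mathcomp Require Import all_boot all_order all_algebra zify.
Set Implicit Arguments. Unset Strict Implicit. Unset Printing Implicit Defensive.
Import Order.TTheory GRing.Theory Num.Theory.

Notation hend p := (height p (size p)).

Lemma height0 p : height p 0 = 0%R.
Proof. by rewrite /height take0 big_nil. Qed.

Lemma height_nil k : height [::] k = 0%R.
Proof. by rewrite /height big_nil. Qed.

Lemma height_cons b p k :
  height (b :: p) k.+1 = ((if b then 1 else -1) + height p k)%R.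
Proof. by rewrite /height take_cons big_cons. Qed.

Lemma height_overflow p k : size p <= k -> height p k = hend p.
Proof. by move=> h; rewrite /height take_oversize // take_size. Qed.

Lemma height_take p j k : k <= j -> height (take j p) k = height p k.
Proof. by move=> h; rewrite /height take_takel. Qed.

Lemma height_catl p q k : k <= size p -> height (p ++ q) k = height p k.
Proof. by move=> h; rewrite /height takel_cat. Qed.

Lemma height_catr p q k : height (p ++ q) (size p + k) = (hend p + height q k)%R.
Proof.
rewrite /height take_cat ltnNge leq_addr /= addKn big_cat /=.
by rewrite take_size.
Qed.

Lemma hend_cat p q : hend (p ++ q) = (hend p + hend q)%R.
Proof. by rewrite size_cat height_catr. Qed.

Lemma height_drop p j k : height (drop j p) k = (height p (j + k) - height p j)%R.
Proof.
have [hj|hj] := leqP j (size p); last first.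
  have hj' := ltnW hj; rewrite drop_oversize // height_nil.
  by rewrite (height_overflow hj') (height_overflow (leq_trans hj' (leq_addr k j))) subrr.
have := height_catr (take j p) (drop j p) k.
rewrite cat_take_drop size_takel // height_take // => ->.
by rewrite addrC addKr.
Qed.

Lemma heightS p k : k < size p ->
  height p k.+1 = (height p k + (if nth true p k then 1 else -1))%R.
Proof. by move=> h; rewrite /height (take_nth true) // -cats1 big_cat big_seq1. Qed.

Lemma height_step p k :
  (height p k - 1 <= height p k.+1)%R /\ (height p k.+1 <= height p k + 1)%R.
Proof.
have [hk|hk] := ltnP k (size p).
  by rewrite heightS //; case: (nth true p k); lia.
by rewrite (height_overflow hk) (height_overflow (leqW hk)); lia.
Qed.

Lemma hend_counts p : hend p = ((nups p)%:Z - (ndowns p)%:Z)%R.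
Proof.
elim: p => [|b p IH]; first by rewrite height_nil.
by rewrite /= height_cons IH /nups /ndowns /=; case: b => /=; lia.
Qed.

Lemma size_counts p : size p = nups p + ndowns p.
Proof. by elim: p => [|[] p IH] //=; rewrite /nups /ndowns /= in IH *; lia. Qed.

Lemma balancedE p : (nups p == ndowns p) = (hend p == 0%R).
Proof. by rewrite hend_counts; apply/eqP/eqP; lia. Qed.

Lemma size_balanced p : hend p = 0%R -> size p = 2 * nups p.
Proof. by rewrite hend_counts size_counts; lia. Qed.

Lemma height_last p : p != [::] -> hend p = 0%R ->
  height p (size p).-1 = (if last true p then -1 else 1)%R.
Proof.
case/lastP: p => // p b _; rewrite -cats1 hend_cat size_cat addn1 /=.
rewrite height_catl // last_cat /= /height take_size !big_cons big_nil.
by case: b; lia.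
Qed.

Lemma height_cat_ge p q k : size p <= k ->
  height (p ++ q) k = (hend p + height q (k - size p))%R.
Proof. by move=> hk; rewrite -height_catr subnKC. Qed.

Lemma mem_heightsP p h : reflect (exists2 k, k <= size p & height p k = h) (h \in heights p).
Proof.
apply: (iffP mapP) => [[k]|[k hk <-]]; last by exists k; rewrite ?mem_iota.
by rewrite mem_iota add0n => /andP[_ hk] ->; exists k.
Qed.

Lemma mem_heights p k : height p k \in heights p.
Proof.
apply/mem_heightsP; have [hk|hk] := leqP k (size p); first by exists k.
by exists (size p); rewrite // (height_overflow (ltnW hk)).
Qed.

Lemma aboveP p : reflect (exists k, 0 < height p k)%R (above p).
Proof.
apply: (iffP hasP) => [[h /mem_heightsP[k _ <-]]|[k hk]]; first by exists k.
by exists (height p k); rewrite ?mem_heights.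
Qed.

Lemma belowP p : reflect (exists k, height p k < 0)%R (below p).
Proof.
apply: (iffP hasP) => [[h /mem_heightsP[k _ <-]]|[k hk]]; first by exists k.
by exists (height p k); rewrite ?mem_heights.
Qed.

Lemma height_le0 p k : ~~ above p -> (height p k <= 0)%R.
Proof. by move/aboveP=> nab; rewrite leNgt; apply/negP=> hk; apply: nab; exists k. Qed.

Lemma height_ge0 p k : ~~ below p -> (0 <= height p k)%R.
Proof. by move/belowP=> nbe; rewrite leNgt; apply/negP=> hk; apply: nbe; exists k. Qed.

Lemma above_neq_nil p : above p -> p != [::].
Proof. by apply: contraTN => /eqP->; apply/aboveP=> -[k]; rewrite height_nil ltxx. Qed.

Lemma below_neq_nil p : below p -> p != [::].
Proof. by apply: contraTN => /eqP->; apply/belowP=> -[k]; rewrite height_nil ltxx. Qed.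

Lemma above_or_below p : p != [::] -> above p || below p.
Proof.
case: p => // -[] p _; [apply/orP; left; apply/aboveP | apply/orP; right; apply/belowP];
  by exists 1; rewrite height_cons height0.
Qed.

Lemma last_heightP p (Q : pred int) : (exists k, Q (height p k)) ->
  exists i, [/\ i <= size p, Q (height p i) &
                forall j, i < j -> j <= size p -> ~~ Q (height p j)].
Proof.
case=> k hk; pose P i := (i <= size p) && Q (height p i).
have exP : exists i, P i.
  have [le|gt] := leqP k (size p); first by exists k; rewrite /P le.
  by exists (size p); rewrite /P leqnn -(height_overflow (ltnW gt)).
have ubP i : P i -> i <= size p by case/andP.
have [i /andP[hi hQ] hmax] := ex_maxnP exP ubP.
exists i; split=> // j hij hj; apply/negP=> hQj.
by have := hmax j; rewrite /P hj hQj => /(_ isT); rewrite leqNgt hij.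
Qed.

Lemma foldr_max_mem (s : seq int) : foldr Num.max 0%R s \in 0%R :: s.
Proof.
elim: s => [|a s IH] /=; first by rewrite mem_seq1.
rewrite maxEle; case: ifP => _; last by rewrite !inE eqxx orbT.
by move: IH; rewrite !inE => /orP[->|->]; rewrite ?orbT.
Qed.

Lemma foldr_max_ge (s : seq int) x : x \in s -> (x <= foldr Num.max 0 s)%R.
Proof.
elim: s => [|a s IH] //=; rewrite inE le_max => /orP[/eqP->|/IH->];
  by rewrite ?lexx ?orbT.
Qed.

Lemma maxh_ge p k : (height p k <= maxh p)%R.
Proof. exact/foldr_max_ge/mem_heights. Qed.

Lemma maxh_mem p : maxh p \in heights p.
Proof.
rewrite /maxh; have := foldr_max_mem (heights p); rewrite inE => /orP[/eqP->|//].
by rewrite -(height0 p) mem_heights.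
Qed.

Lemma index_heightsP p h : h \in heights p ->
  [/\ index h (heights p) <= size p, height p (index h (heights p)) = h &
      forall j, j < index h (heights p) -> height p j != h].
Proof.
move=> hh; have hK : index h (heights p) <= size p.
  by have := hh; rewrite -index_mem size_map size_iota.
split=> // [|j hj].
  by rewrite -[RHS](nth_index 0%R hh) (nth_map 0) ?nth_iota ?size_iota.
have hjs : j < (size p).+1 := leq_trans hj (leqW hK).
by have := before_find 0%R hj; rewrite (nth_map 0) ?nth_iota ?size_iota //= => ->.
Qed.

Lemma index_heights p K : K <= size p ->
  (forall j, j < K -> height p j != height p K) -> index (height p K) (heights p) = K.
Proof.
move=> hK hne; have [hK' hh hb] := index_heightsP (mem_heights p K).
have [lt|gt|//] := ltngtP (index (height p K) (heights p)) K.
  by have := hne _ lt; rewrite hh eqxx.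
by have := hb _ gt; rewrite eqxx.
Qed.

Lemma kmaxP p : [/\ kmax p <= size p, height p (kmax p) = maxh p &
  forall j, j < kmax p -> (height p j < maxh p)%R].
Proof.
have [hK hm hb] := index_heightsP (maxh_mem p); split=> // j /hb.
by rewrite lt_neqAle maxh_ge andbT.
Qed.

Lemma kmax_eq p K : K <= size p -> (forall k, (height p k <= height p K)%R) ->
  (forall j, j < K -> (height p j < height p K)%R) -> kmax p = K.
Proof.
move=> hK hle hlt; have hm : maxh p = height p K.
  apply/le_anti; rewrite maxh_ge andbT.
  by have /mem_heightsP[k _ <-] := maxh_mem p.
by rewrite /kmax hm index_heights // => j /hlt /lt_eqF->.
Qed.

Lemma height_lt_first_hit p m K : (0 <= m)%R ->
  (forall j, j < K -> height p j != m) -> forall j, j < K -> (height p j < m)%R.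
Proof.
move=> hm hne; elim=> [|j IH] hj; rewrite lt_neqAle hne //.
  by rewrite height0.
have [_ hstep] := height_step p j; have := IH (ltnW hj); lia.
Qed.

Definition flip (p : lpath) : lpath := map negb p.

Definition flip3 (x : triple) : triple :=
  let: (A, B, C) := x in (flip A, flip B, flip C).

Definition flip_marked (y : lpath * nat) : lpath * nat := (flip y.1, y.2).

Lemma flipK : involutive flip.
Proof. exact: (mapK negbK). Qed.

Lemma flip_markedK : involutive flip_marked.
Proof. by case=> H X; rewrite /flip_marked flipK. Qed.

Lemma flip3K : involutive flip3.
Proof. by case=> [[A B] C]; rewrite /flip3 !flipK. Qed.

Lemma size_flip p : size (flip p) = size p.
Proof. exact: size_map. Qed.

Lemma flip_cat p q : flip (p ++ q) = flip p ++ flip q.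
Proof. exact: map_cat. Qed.

Lemma height_flip p k : height (flip p) k = (- height p k)%R.
Proof.
rewrite /height /flip -map_take big_map -sumrN.
by apply: eq_bigr => -[]; rewrite /= ?opprK.
Qed.

Lemma heights_flip p : heights (flip p) = map (@GRing.opp int) (heights p).
Proof. by rewrite /heights size_flip -map_comp; apply: eq_map => k; apply: height_flip. Qed.

Lemma nups_flip p : nups (flip p) = ndowns p.
Proof. by rewrite /nups count_map. Qed.

Lemma ndowns_flip p : ndowns (flip p) = nups p.
Proof. by rewrite -{2}(flipK p) nups_flip. Qed.

Lemma above_flip p : above (flip p) = below p.
Proof. by rewrite /above /below heights_flip has_map; apply: eq_has => h /=; rewrite oppr_gt0. Qed.

Lemma below_flip p : below (flip p) = above p.
Proof. by rewrite -{2}(flipK p) above_flip. Qed.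

Lemma ends_down_flip p : ends_down (flip p) = ends_up p.
Proof. by case: p => //= b p; rewrite (last_map negb) negbK. Qed.

Lemma kmax_flip p : kmax (flip p) = kmin p.
Proof.
have maxh_flip : maxh (flip p) = (- minh p)%R.
  rewrite /maxh /minh heights_flip; elim: (heights p) => [|h s IH] /=.
    by rewrite oppr0.
  by rewrite IH oppr_min.
by rewrite /kmax /kmin maxh_flip heights_flip index_map //; apply: oppr_inj.
Qed.

Lemma inT_flip3 n x : inT n x -> inT n (flip3 x).
Proof.
case: x => [[A B] C] /and4P[/eqP hA /eqP hB /eqP hC hn].
by rewrite /inT /flip3 !nups_flip !ndowns_flip -hA -hB -hC !eqxx.
Qed.

Lemma inU_flip3 x : inU (flip3 x) = inV x.
Proof. by case: x => [[A B] C]; rewrite /inU /inV /flip3 above_flip ends_down_flip. Qed.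

Lemma inV_flip3 x : inV (flip3 x) = inU x.
Proof. by rewrite -{2}(flip3K x) inU_flip3. Qed.

Lemma t_flip x : t x = flip_marked (s (flip3 x)).
Proof.
case: x => [[A B] C]; rewrite /t /s /cut_concat /flip3 /flip_marked /= kmax_flip.
by rewrite !flip_cat -map_take -map_drop !flipK size_flip.
Qed.

Lemma inTP n A B C :
  reflect [/\ hend A = 0%R, hend B = 0%R, hend C = 0%R & size A + size B + size C = 2 * n]
          (inT n (A, B, C)).
Proof.
rewrite /inT !balancedE; apply: (iffP and4P) => -[/eqP hA /eqP hB /eqP hC hn].
  split=> //; rewrite (size_balanced hA) (size_balanced hB) (size_balanced hC).
  by move/eqP: hn; lia.
split=> //; apply/eqP; move: hn.
by rewrite (size_balanced (eqP hA)) (size_balanced (eqP hB)) (size_balanced (eqP hC)); lia.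
Qed.

Lemma inDP n H X :
  reflect [/\ size H = 2 * n, hend H = 0%R & X <= size H] (inD n (H, X)).
Proof.
rewrite /inD; apply: (iffP and3P) => -[hu hd hX].
  have hb : hend H = 0%R by apply/eqP; rewrite -balancedE (eqP hu) (eqP hd).
  by split; rewrite // size_balanced // (eqP hu).
have hb : nups H = ndowns H by apply/eqP; rewrite balancedE hd.
by split; apply/eqP; move: hu hX; rewrite size_counts -hb; lia.
Qed.

Lemma inD_flip n y : inD n y -> inD n (flip_marked y).
Proof. by case: y => H X /and3P[hu hd hX]; rewrite /inD /= nups_flip ndowns_flip hu hd. Qed.

Lemma split_uniq (P : lpath -> lpath -> Prop) :
  (forall B D B' D', B ++ D = B' ++ D' -> P B D -> P B' D' -> size B' <= size B) ->
  forall B D B' D', B ++ D = B' ++ D' -> P B D -> P B' D' -> B = B' /\ D = D'.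
Proof.
move=> hsize B D B' D' E hP hP'; have /eqP := E.
rewrite eqseq_cat; first by case/andP=> /eqP-> /eqP->.
by apply/anti_leq; rewrite (hsize _ _ _ _ E) ?(hsize _ _ _ _ (esym E)).
Qed.

Definition last_return (B D : lpath) : Prop :=
  [/\ hend B = 0%R, ends_down B & forall k, (height D k <= 0)%R].

Lemma last_return_size B D B' D' : B ++ D = B' ++ D' ->
  last_return B D -> last_return B' D' -> size B' <= size B.
Proof.
move=> E [hB _ hD] [hB' eB' _]; rewrite leqNgt; apply/negP=> lt.
have nB' : B' != [::] by case: B' lt {E hB' eB'}.
have hk : size B <= (size B').-1 by move: lt; lia.
have := height_catl D' (leq_pred (size B')).
rewrite -E height_cat_ge // hB add0r height_last //.
have -> : last true B' = false by case: B' nB' eB' {E hB' lt hk} => //= b B' _ /negbTE.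
by move=> h; have := hD ((size B').-1 - size B); rewrite h.
Qed.

Lemma last_return_exists W : (hend W <= 0)%R ->
  exists B D, W = B ++ D /\ last_return B D.
Proof.
move=> hW; have [ab|nab] := boolP (above W); last first.
  by exists [::], W; split=> //; split=> // [|k]; rewrite ?height_nil ?height_le0.
have [i [hi hpos hlast]] := last_heightP (elimTF (aboveP W) ab).
have lt : i < size W.
  by rewrite ltn_neqAle hi andbT; apply: contraTneq hpos => ->; rewrite -leNgt.
have hnext : (height W i.+1 <= 0)%R by rewrite leNgt hlast.
have := heightS lt; case ei: (nth true W i) => hS.
  by move: hpos hnext; rewrite hS; lia.
exists (take i.+1 W), (drop i.+1 W); split; first by rewrite cat_take_drop.
split.
- by rewrite size_takel // height_take //; move: hpos hnext; rewrite hS; lia.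
- by rewrite (take_nth true) // /ends_down last_rcons ei; case: (take i W).
- move=> k; rewrite height_drop; have [hk|hk] := leqP (i.+1 + k) (size W).
    have := hlast (i.+1 + k); rewrite -leNgt; move: hpos hnext; rewrite hS; lia.
  by rewrite (height_overflow (ltnW hk)); move: hW hpos hnext; rewrite hS; lia.
Qed.

Lemma r_inD n x : inT n x -> inR x -> inD n (r x) /\ height (r x).1 (r x).2 = 0%R.
Proof.
case: x => [[A B] C] /inTP[hA hB _ hn] /eqP hC; subst C.
rewrite /= height_catl //; split=> //; apply/inDP; split.
- by rewrite size_cat -hn addn0.
- by rewrite hend_cat hA hB addr0.
- by rewrite size_cat leq_addr.
Qed.

Lemma r_inj x y : inR x -> inR y -> r x = r y -> x = y.
Proof.
case: x => [[A B] C] /eqP->; case: y => [[A' B'] C'] /eqP-> [/eqP E hs].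
by move: E; rewrite eqseq_cat // => /andP[/eqP-> /eqP->].
Qed.

Lemma r_surj n H X : inD n (H, X) -> height H X = 0%R ->
  exists2 x, inT n x && inR x & r x = (H, X).
Proof.
case/inDP=> hs hb hX h0.
exists (take X H, drop X H, [::]); last by rewrite /= cat_take_drop size_takel.
rewrite /inR eqxx andbT; apply/inTP; split.
- by rewrite size_takel // height_take.
- by rewrite height_drop size_drop subnKC // hb h0 subrr.
- exact: height0.
- by rewrite addn0 -size_cat cat_take_drop.
Qed.

Lemma height_s_prefix A B C j : j <= kmax C -> height (s (A, B, C)).1 j = height C j.
Proof.
have [hK _ _] := kmaxP C; move=> hj.
by rewrite /s /cut_concat /= height_catl ?height_take // size_takel.
Qed.

Lemma height_s_point A B C : hend A = 0%R ->
  height (s (A, B, C)).1 (s (A, B, C)).2 = maxh C.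
Proof.
have [hK hm _] := kmaxP C; move=> hA.
have := height_catr (take (kmax C) C) (A ++ B ++ drop (kmax C) C) (size A).
rewrite size_takel // height_take // hm (height_catl _ (leqnn _)) hA addr0 => <-.
by rewrite /s /cut_concat.
Qed.

Lemma s_first_hit A B C : hend A = 0%R ->
  index (height (s (A, B, C)).1 (s (A, B, C)).2) (heights (s (A, B, C)).1) = kmax C.
Proof.
have [hK hm hb] := kmaxP C; move=> hA.
rewrite height_s_point // -hm -(height_s_prefix A B (leqnn _)); apply: index_heights.
  by rewrite /s /cut_concat /= size_cat size_takel // leq_addr.
move=> j hj; rewrite !height_s_prefix ?(ltnW hj) // hm.
by rewrite (lt_eqF (hb j hj)).
Qed.

Lemma last_return_kmax B C : hend B = 0%R -> ends_down B ->
  last_return B (drop (kmax C) C).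
Proof.
have [_ hm _] := kmaxP C.
by split=> // k; rewrite height_drop hm subr_le0 maxh_ge.
Qed.

Lemma s_inD n x : inT n x -> inU x -> inD n (s x) /\ (0 < height (s x).1 (s x).2)%R.
Proof.
case: x => [[A B] C] /inTP[hA hB hC hn] /andP[/aboveP[k hk] _].
have [hK _ _] := kmaxP C.
rewrite height_s_point //; split; last exact: lt_le_trans hk (maxh_ge C k).
have hCs := cat_take_drop (kmax C) C.
apply/inDP; split; rewrite /s /cut_concat /=.
- by rewrite !size_cat -hn -[size C](congr1 size hCs) size_cat; lia.
- by rewrite !hend_cat hA hB !add0r -hend_cat hCs.
- by rewrite !size_cat size_takel // leq_add2l leq_addr.
Qed.

Lemma s_inj n x y : inT n x -> inU x -> inT n y -> inU y -> s x = s y -> x = y.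
Proof.
case: x => [[A B] C] /inTP[hA hB _ _] /andP[_ eB].
case: y => [[A' B'] C'] /inTP[hA' hB' _ _] /andP[_ eB'] e.
have eK : kmax C' = kmax C by rewrite -(s_first_hit B C hA) e s_first_hit.
have [hK _ _] := kmaxP C; have [hK' _ _] := kmaxP C'.
move: e (last_return_kmax C hB eB) (last_return_kmax C' hB' eB').
rewrite /s /cut_concat /= eK in hK' * => -[/eqP E eX] lr lr'.
move: E; rewrite eqseq_cat; last by rewrite !size_takel.
case/andP=> /eqP eT.
rewrite eqseq_cat; last exact: addnI eX.
case/andP=> /eqP eA /eqP /(split_uniq last_return_size) /(_ lr lr')[eB0 eD].
by rewrite -(cat_take_drop (kmax C) C) -(cat_take_drop (kmax C) C') eT eA eB0 eD.
Qed.

Lemma kmax_cat P D : (forall j, j < size P -> (height P j < hend P)%R) ->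
  (forall k, (height D k <= 0)%R) -> kmax (P ++ D) = size P.
Proof.
move=> hP hD; apply: kmax_eq => [|k|j hj]; rewrite ?size_cat ?leq_addr //.
  rewrite (height_catl _ (leqnn _)); have [hk|hk] := leqP k (size P).
    rewrite height_catl //; move: hk; rewrite leq_eqVlt => /orP[/eqP->//|/hP].
    exact: ltW.
  by rewrite height_cat_ge ?(ltnW hk) // gerDl.
by rewrite !height_catl ?hP // ltnW.
Qed.

Lemma s_surj n H X : inD n (H, X) -> (0 < height H X)%R ->
  exists2 x, inT n x && inU x & s x = (H, X).
Proof.
case/inDP=> hs hb hX hm.
have [hK hKm hne] := index_heightsP (mem_heights H X).
set K := index _ _ in hK hKm hne.
have KX : K <= X by rewrite leqNgt; apply/negP=> /hne; rewrite eqxx.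
pose P := take K H; pose A := take (X - K) (drop K H).
have sP : size P = K by rewrite size_takel.
have sA : size A = X - K by rewrite size_takel // size_drop; lia.
have hP : hend P = height H X by rewrite sP height_take.
have hA : hend A = 0%R by rewrite sA height_take // height_drop subnKC // hKm subrr.
have [B [D [hW lr]]] : exists B D, drop X H = B ++ D /\ last_return B D.
  apply: last_return_exists.
  by rewrite height_drop size_drop subnKC // hb sub0r oppr_le0 ltW.
have hH : H = P ++ A ++ B ++ D.
  by rewrite -hW -[X](subnK KX) -drop_drop !cat_take_drop.
case: lr => hB eB hD; have hPD : kmax (P ++ D) = size P.
  apply: kmax_cat hD => j; rewrite hP sP => hj.
  by rewrite height_take ?(ltnW hj) // (height_lt_first_hit (ltW hm) hne).
exists (A, B, P ++ D); last first.
  by rewrite /s /cut_concat /= hPD take_size_cat // drop_size_cat // -hH sP sA subnKC.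
apply/andP; split; last first.
  apply/andP; split=> //; apply/aboveP; exists (size P).
  by rewrite (height_catl _ (leqnn _)) hP.
apply/inTP; split=> //.
  by move: hb; rewrite hH !hend_cat hA hB; lia.
by rewrite -hs hH !size_cat; lia.
Qed.

Lemma t_inD n x : inT n x -> inV x -> inD n (t x) /\ (height (t x).1 (t x).2 < 0)%R.
Proof.
move=> hT hV; have := s_inD (inT_flip3 hT); rewrite inU_flip3 t_flip => /(_ hV).
case: (s (flip3 x)) => H X [hD hpos]; split; first exact: inD_flip.
by rewrite /= height_flip oppr_lt0.
Qed.

Lemma t_inj n x y : inT n x -> inV x -> inT n y -> inV y -> t x = t y -> x = y.
Proof.
move=> hx Vx hy Vy; rewrite !t_flip => /(can_inj flip_markedK).
rewrite -inU_flip3 in Vx; rewrite -inU_flip3 in Vy.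
by move/(s_inj (inT_flip3 hx) Vx (inT_flip3 hy) Vy)/(can_inj flip3K).
Qed.

Lemma t_surj n H X : inD n (H, X) -> (height H X < 0)%R ->
  exists2 x, inT n x && inV x & t x = (H, X).
Proof.
move=> hD hm; have := s_surj (inD_flip hD); rewrite height_flip oppr_gt0.
case/(_ hm)=> x /andP[hx Ux] e; exists (flip3 x).
  by rewrite inV_flip3 Ux andbT inT_flip3.
by rewrite t_flip flip3K e flip_markedK.
Qed.

Definition inJ (x : triple) : bool := [&& ~~ inR x, ~~ inU x & ~~ inV x].

Definition crossing (B C : lpath) : bool :=
  [&& B != [::], C != [::] & if last true B then ~~ below C else ~~ above C].

Lemma inJE A B C : inJ (A, B, C) = crossing B C.
Proof.
have [->|nC] := eqVneq C [::]; first by rewrite /inJ /crossing /= andbF.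
rewrite /inJ /inR /inU /inV /crossing /= nC.
have := above_or_below nC.
by case: B => [|b B] /=; last case: (last b B); case: (above C); case: (below C).
Qed.

Lemma crossing_flip B C : crossing (flip B) (flip C) = crossing B C.
Proof.
rewrite /crossing above_flip below_flip -!size_eq0 !size_flip !size_eq0.
by case: B => [|b B] //=; rewrite (last_map negb); case: (last b B).
Qed.

Lemma crossing_above_below B C : hend B = 0%R -> crossing B C ->
  above (B ++ C) && below (B ++ C).
Proof.
move=> hB /and3P[nB nC hC]; have := height_last nB hB.
rewrite -(height_catl C (leq_pred _)) => hl.
have shift k : height (B ++ C) (size B + k) = height C k by rewrite height_catr hB add0r.
have := above_or_below nC; case: (last true B) hC hl => /negbTE-> hl; rewrite ?orbF.
  move=> /aboveP[k hk]; apply/andP; split.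
    by apply/aboveP; exists (size B + k); rewrite shift.
  by apply/belowP; exists (size B).-1; rewrite hl.
move=> /belowP[k hk]; apply/andP; split.
  by apply/aboveP; exists (size B).-1; rewrite hl.
by apply/belowP; exists (size B + k); rewrite shift.
Qed.

Lemma crossing_size B C B' C' : B ++ C = B' ++ C' ->
  hend B = 0%R /\ crossing B C -> hend B' = 0%R /\ crossing B' C' -> size B' <= size B.
Proof.
move=> E [hB /and3P[_ _ hC]] [hB' /and3P[nB' nC' hC']].
rewrite leqNgt; apply/negP=> lt; have hl := height_last nB' hB'.
have h1 : height C ((size B').-1 - size B) = height B' (size B').-1.
  rewrite -(height_catl C' (leq_pred _)) -E height_cat_ge ?hB ?add0r //; lia.
have h2 : height C (size B' + 1 - size B) = height C' 1.
  rewrite -[RHS]add0r -hB' -height_catr -E height_cat_ge ?hB ?add0r //; lia.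
have hc1 : height C' 1 = 1%R \/ height C' 1 = (-1)%R.
  by case: C' nC' {E hC'} h2 => // -[] C' _ _; rewrite height_cons height0; [left|right].
have side D b k : (if b then ~~ below D else ~~ above D) ->
    if b then (0 <= height D k)%R else (height D k <= 0)%R.
  by case: b => [/height_ge0|/height_le0].
move: (side _ _ ((size B').-1 - size B) hC) (side _ _ (size B' + 1 - size B) hC).
move: (side _ _ 1 hC') hl hc1; rewrite h1 h2.
by case: (last true B); case: (last true B') => /=; lia.
Qed.

Lemma crossing_exists_after W i k : hend W = 0%R -> (height W i < 0)%R ->
  i < k -> (0 < height W k)%R ->
  (forall j, i < j -> j <= size W -> (0 <= height W j)%R) ->
  exists B C, W = B ++ C /\ hend B = 0%R /\ crossing B C.
Proof.
move=> h0 neg ik pos after.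
have lt : i.+1 < size W.
  rewrite ltnNge; apply/negP=> le.
  by move: pos; rewrite (height_overflow (leq_trans le ik)) h0 ltxx.
have ltW' : i < size W by apply: ltnW.
have := after i.+1 (ltnSn i) (ltnW lt).
rewrite (heightS ltW'); case ei: (nth true W i) => hnext; last by lia.
have h1 : height W i.+1 = 0%R by rewrite (heightS ltW') ei; lia.
exists (take i.+1 W), (drop i.+1 W); split; first by rewrite cat_take_drop.
split; first by rewrite size_takel ?(ltnW lt) // height_take.
apply/and3P; split.
- by rewrite -size_eq0 size_takel ?(ltnW lt).
- by rewrite -size_eq0 size_drop subn_eq0 -ltnNge.
- rewrite (take_nth true) // last_rcons ei; apply/negP=> /belowP[j].
  apply/negP; rewrite -leNgt height_drop h1 subr0.
  have [hj|hj] := leqP (i.+1 + j) (size W).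
    by apply: after; rewrite // addSn ltnS leq_addr.
  by rewrite (height_overflow (ltnW hj)) h0.
Qed.

Lemma crossing_exists W : hend W = 0%R -> above W -> below W ->
  exists B C, W = B ++ C /\ hend B = 0%R /\ crossing B C.
Proof.
move=> h0 /aboveP ab /belowP be.
have [i [_ /= neg lastneg]] := @last_heightP W (fun h => h < 0)%R be.
have [k [_ /= pos lastpos]] := @last_heightP W (fun h => 0 < h)%R ab.
have [ik|ki|eq] := ltngtP i k.
- by apply: crossing_exists_after h0 neg ik pos _ => j ij hj; rewrite leNgt lastneg.
- have h0' : hend (flip W) = 0%R by rewrite size_flip height_flip h0 oppr0.
  have neg' : (height (flip W) k < 0)%R by rewrite height_flip oppr_lt0.
  have pos' : (0 < height (flip W) i)%R by rewrite height_flip oppr_gt0.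
  have after' j : k < j -> j <= size (flip W) -> (0 <= height (flip W) j)%R.
    by rewrite size_flip height_flip oppr_ge0 leNgt => kj hj; rewrite lastpos.
  have [B [C [hW [hB cr]]]] := crossing_exists_after h0' neg' ki pos' after'.
  exists (flip B), (flip C); rewrite -flip_cat -hW flipK crossing_flip.
  by rewrite size_flip height_flip hB oppr0.
- by move: pos neg; rewrite eq => /lt_trans hlt /hlt; rewrite ltxx.
Qed.

Lemma z_inI n x : inT n x -> inJ x -> [&& inT n (z x), inU (z x) & inV (z x)].
Proof.
case: x => [[A B] C] /inTP[hA hB hC hn]; rewrite inJE => cr.
have /andP[ab be] := crossing_above_below hB cr.
have hT : inT n (A, [::], B ++ C).
  apply/inTP; split=> //; first exact: height0.
    by rewrite hend_cat hB hC addr0.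
  by rewrite size_cat addn0 -hn addnA.
by rewrite hT /inU /inV /= ab be.
Qed.

Lemma z_inj n x y : inT n x -> inJ x -> inT n y -> inJ y -> z x = z y -> x = y.
Proof.
case: x => [[A B] C] /inTP[_ hB _ _]; rewrite inJE => cr.
case: y => [[A' B'] C'] /inTP[_ hB' _ _]; rewrite inJE => cr' [-> E].
by have [-> ->] := split_uniq crossing_size E (conj hB cr) (conj hB' cr').
Qed.

Lemma z_surj n y : inT n y -> inU y -> inV y -> exists2 x, inT n x && inJ x & z x = y.
Proof.
case: y => [[A B0] W] hT /andP[ab eD] /andP[be eU].
have eB0 : B0 = [::] by case: B0 eD eU {hT} => //= b B; case: (last b B).
subst B0; case/inTP: hT => hA _ hW hn.
have [B [C [eW [hB cr]]]] := crossing_exists hW ab be.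
exists (A, B, C); last by rewrite eW.
rewrite inJE cr andbT; apply/inTP; split=> //.
  by move: hW; rewrite eW hend_cat hB add0r.
by rewrite -hn eW size_cat /= addn0 addnA.
Qed.

Definition to_V (x : triple) : triple := if inV x then x else z x.

Lemma z_inU n x : inT n x -> ~~ inR x -> ~~ inU x -> ~~ inV x -> inU (z x).
Proof.
move=> hT hR hU hV; have := @z_inI n x hT.
by rewrite /inJ hR hU hV => /(_ isT) /and3P[].
Qed.

Lemma to_V_in n x : inT n x -> ~~ inR x -> ~~ inU x -> inT n (to_V x) && inV (to_V x).
Proof.
rewrite /to_V => hT hR hU; case: ifPn => [->|hV]; first by rewrite hT.
by have := @z_inI n x hT; rewrite /inJ hR hU hV => /(_ isT) /and3P[-> _ ->].
Qed.

Lemma to_V_inj n x y : inT n x -> ~~ inR x -> ~~ inU x ->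
  inT n y -> ~~ inR y -> ~~ inU y -> to_V x = to_V y -> x = y.
Proof.
move=> hx Rx Ux hy Ry Uy; rewrite /to_V; case: ifPn => Vx; case: ifPn => Vy // e.
- by move: (z_inU hy Ry Uy Vy); rewrite -e (negbTE Ux).
- by move: (z_inU hx Rx Ux Vx); rewrite e (negbTE Uy).
- by apply: (z_inj hx _ hy _ e); apply/and3P.
Qed.

Lemma inU_notR x : inU x -> ~~ inR x.
Proof. by case: x => [[A B] C] /andP[/above_neq_nil]. Qed.

Lemma inV_notR x : inV x -> ~~ inR x.
Proof. by case: x => [[A B] C] /andP[/below_neq_nil]. Qed.

Lemma to_V_surj n y : inT n y -> inV y ->
  exists x, [/\ inT n x, ~~ inR x, ~~ inU x & to_V x = y].
Proof.
move=> hy Vy; have [Uy|Uy] := boolP (inU y).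
  have [x /andP[hx /and3P[Rx Ux Vx]] <-] := z_surj hy Uy Vy.
  by exists x; rewrite /to_V (negbTE Vx).
by exists y; rewrite /to_V Vy inV_notR.
Qed.

Definition region (x : triple) : int := (if inR x then 0 else if inU x then 1 else -1)%R.

Variant region_spec (x : triple) : int -> Prop :=
| RegionR of inR x : region_spec x 0
| RegionU of ~~ inR x & inU x : region_spec x 1
| RegionVJ of ~~ inR x & ~~ inU x : region_spec x (-1).

Lemma regionP x : region_spec x (region x).
Proof. by rewrite /region; case: ifPn => hR; [|case: ifPn]; constructor. Qed.

Lemma g_R x : inR x -> g x = r x.
Proof. by rewrite /g => ->. Qed.

Lemma g_U x : ~~ inR x -> inU x -> g x = s x.
Proof. by rewrite /g => /negbTE-> ->. Qed.

Lemma g_to_V x : ~~ inR x -> ~~ inU x -> g x = t (to_V x).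
Proof. by rewrite /g /to_V => /negbTE-> /negbTE->; case: ifP. Qed.

Lemma g_inD n x : inT n x -> inD n (g x) /\ Num.sg (height (g x).1 (g x).2) = region x.
Proof.
move=> hT; case: regionP => [hR|hR hU|hR hU].
- by rewrite g_R //; have [-> ->] := r_inD hT hR; rewrite sgr0.
- by rewrite g_U //; have [-> /gtr0_sg->] := s_inD hT hU.
- rewrite g_to_V //; have /andP[hT' hV'] := to_V_in hT hR hU.
  by have [-> /ltr0_sg->] := t_inD hT' hV'.
Qed.

Lemma g_inj n : {in inT n &, injective g}.
Proof.
move=> x y hx hy e; have := (g_inD hx).2; rewrite e (g_inD hy).2.
case: (regionP x) => [Rx|Rx Ux|Rx Ux]; case: (regionP y) => [Ry|Ry Uy|Ry Uy] // _; move: e.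
- by rewrite !g_R //; apply: r_inj.
- by rewrite !g_U //; apply: (s_inj hx Ux hy Uy).
have /andP[hx' Vx] := to_V_in hx Rx Ux; have /andP[hy' Vy] := to_V_in hy Ry Uy.
rewrite !g_to_V // => /(t_inj hx' Vx hy' Vy).
exact: to_V_inj hx Rx Ux hy Ry Uy.
Qed.

Lemma g_surj n y : inD n y -> exists2 x, inT n x & g x = y.
Proof.
case: y => H X hD; case: (ltgtP (height H X) 0) => hX.
- have [y /andP[hy Vy] <-] := t_surj hD hX.
  have [x [hx Rx Ux <-]] := to_V_surj hy Vy.
  by exists x; rewrite // g_to_V.
- have [x /andP[hx Ux] <-] := s_surj hD hX.
  by exists x; rewrite // g_U // inU_notR.
- have [x /andP[hx Rx] <-] := r_surj hD hX.
  by exists x; rewrite // g_R.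
Qed.

Unset Implicit Arguments.

Theorem theorem2 (n : nat) (hn : 0 < n) :
  (forall x, inT n x -> inD n (g x)) /\
  {in inT n &, injective g} /\
  (forall y, inD n y -> exists2 x, inT n x & g x = y).
Proof.
split; first by move=> x /g_inD[].
by split; [exact: g_inj | exact: g_surj].
Qed.
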